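(* For all positive integers $m,n,p,q$, $$\theta(K_{m,n}\times K_{p,q})=\max\{\theta(K_{mp,nq}),\ \theta(K_{mq,np})\}.$$
   Context: The thickness $\theta(G)$ of a graph $G$ is the minimum number of planar subgraphs whose union is $G$. The Kronecker product $G\times H$ of graphs $G$ and $H$ is the graph with vertex set $V(G)\times V(H)$ in which $(g,h)$ and $(g',h')$ are adjacent if and only if $gg'\in E(G)$ and $hh'\in E(H)$. $K_{a,b}$ denotes the complete bipartite graph with parts of sizes $a$ and $b$. *)

From Stdlib Require Import Reals ClassicalEpsilon.
From mathcomp Require Import all_boot.

Set Implicit Arguments.
Unset Strict Implicit.
Unset Printing Implicit Defensive.

(* A (simple) graph is given by a finite vertex type V and an adjacency
   relation E : rel V (the graphs below are symmetric and irreflexive). *)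

Definition Kbip (a b : nat) : rel ('I_a + 'I_b)%type :=
  fun x y => match x, y with
             | inl _, inr _ | inr _, inl _ => true
             | _, _ => false
             end.

Arguments Kbip : clear implicits.

Definition kron (V W : finType) (E : rel V) (F : rel W) : rel (V * W)%type :=
  fun x y => E x.1 y.1 && F x.2 y.2.

Local Open Scope R_scope.

Definition planar (V : finType) (E : rel V) : Prop :=
  exists (pos : V -> R * R) (arc : V -> V -> R -> R * R),
    injective pos /\
    (forall u v, E u v ->
       continuity (fun t => fst (arc u v t)) /\
       continuity (fun t => snd (arc u v t)) /\
       arc u v 0 = pos u /\ arc u v 1 = pos v /\
       (forall s t, 0 <= s <= 1 -> 0 <= t <= 1 -> arc u v s = arc u v t -> s = t) /\
       (forall t, 0 <= t <= 1 -> arc v u t = arc u v (1 - t)) /\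
       (forall t w, 0 < t < 1 -> arc u v t <> pos w)) /\
    (forall u v x y, E u v -> E x y ->
       ~ ((u = x /\ v = y) \/ (u = y /\ v = x)) ->
       forall s t, 0 < s < 1 -> 0 < t < 1 -> arc u v s <> arc x y t).

Local Close Scope R_scope.

Definition union_of_planar (V : finType) (E : rel V) (k : nat) : Prop :=
  exists F : 'I_k -> rel V,
    (forall i, planar (F i) /\ (forall x y, F i x y -> E x y)) /\
    (forall x y, E x y -> exists i, F i x y).

Definition is_thickness (V : finType) (E : rel V) (t : nat) : Prop :=
  union_of_planar E t /\ (forall k, union_of_planar E k -> t <= k).

Definition thickness (V : finType) (E : rel V) : nat :=
  epsilon (inhabits 0) (is_thickness E).

(* The Kronecker product of K_{m,n} (parts M, N) and K_{p,q} (parts P, Q) is the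
   disjoint union of the complete bipartite graphs between M x P and N x Q and
   between M x Q and N x P, i.e. of K_{mp,nq} and K_{mq,np}.  The thickness of a
   disjoint union is the maximum of the thicknesses: a decomposition of the union
   restricts to each component, and conversely the i-th planar layers of the two
   components can be drawn side by side in the two half-planes. *)

From Stdlib Require Import Reals Lra Psatz Wf_nat Classical ClassicalEpsilon.
From mathcomp Require Import all_boot.

Set Implicit Arguments.
Unset Strict Implicit.
Unset Printing Implicit Defensive.

Definition sum_rel (V1 V2 : Type) (E1 : rel V1) (E2 : rel V2) : rel (V1 + V2) :=
  fun z w => match z, w with
             | inl a, inl b => E1 a b
             | inr a, inr b => E2 a b
             | _, _ => false
             end.

Lemma sum_rel_irr (V1 V2 : Type) (E1 : rel V1) (E2 : rel V2) :
  irreflexive E1 -> irreflexive E2 -> irreflexive (sum_rel E1 E2).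
Proof. by move=> irr1 irr2 [a|b] /=. Qed.

Local Open Scope R_scope.

Section Drawings.

Variable V : finType.
Implicit Types (E : rel V) (pos : V -> R * R) (arc : V -> V -> R -> R * R).

Definition edge_arc pos arc (u v : V) : Prop :=
  continuity (fun t => fst (arc u v t)) /\
  continuity (fun t => snd (arc u v t)) /\
  arc u v 0 = pos u /\ arc u v 1 = pos v /\
  (forall s t, 0 <= s <= 1 -> 0 <= t <= 1 -> arc u v s = arc u v t -> s = t) /\
  (forall t, 0 <= t <= 1 -> arc v u t = arc u v (1 - t)) /\
  (forall t w, 0 < t < 1 -> arc u v t <> pos w).

Definition drawing E pos arc : Prop :=
  injective pos /\
  (forall u v, E u v -> edge_arc pos arc u v) /\
  (forall u v x y, E u v -> E x y ->
     ~ ((u = x /\ v = y) \/ (u = y /\ v = x)) ->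
     forall s t, 0 < s < 1 -> 0 < t < 1 -> arc u v s <> arc x y t).

Lemma planarP E : planar E <-> exists pos arc, drawing E pos arc.
Proof. by []. Qed.

(* Vertices on the x-axis, the edge drawn as a parabolic arc above it. *)
Lemma planar_single_edge E : irreflexive E ->
  (forall u v x y, E u v -> E x y -> (u = x /\ v = y) \/ (u = y /\ v = x)) ->
  planar E.
Proof.
move=> irrE one_edge; apply/planarP.
pose pos (x : V) : R * R := (INR (enum_rank x), 0).
have pos_inj : injective pos.
  by move=> x y [/INR_eq/val_inj/enum_rank_inj].
exists pos, (fun u v t => ((1 - t) * fst (pos u) + t * fst (pos v), t * (1 - t))).
split; [done | split => [u v Euv | u v x y Euv Exy]]; last first.
  by case; apply: one_edge.
have neq_uv : fst (pos u) <> fst (pos v).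
  move=> eq_uv; have uv : pos u = pos v by rewrite /pos /= in eq_uv *; rewrite eq_uv.
  by move: Euv; rewrite (pos_inj _ _ uv) irrE.
rewrite /edge_arc /pos /= in neq_uv *.
move: (INR (enum_rank u)) (INR (enum_rank v)) neq_uv => a b neq_ab.
do 2 (split; first by reg).
do 2 (split; first by f_equal; ring).
split.
  move=> s t _ _ [eq_st _].
  have : (b - a) * (s - t) = 0 by lra.
  by case/Rmult_integral => ?; lra.
split; first by move=> t _; f_equal; ring.
by move=> t w t01 [_]; nra.
Qed.

Lemma drawing_map E pos arc (h : R * R -> R * R) :
  injective h ->
  (forall g : R -> R * R,
     continuity (fun t => fst (g t)) -> continuity (fun t => snd (g t)) ->
     continuity (fun t => fst (h (g t))) /\ continuity (fun t => snd (h (g t)))) ->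
  drawing E pos arc -> drawing E (fun x => h (pos x)) (fun u v t => h (arc u v t)).
Proof.
move=> h_inj h_cont [pos_inj [edges disj]]; split; first by move=> x y /h_inj/pos_inj.
split=> [u v Euv | u v x y Euv Exy ne s t s01 t01 /h_inj]; last exact: disj.
have [c1 [c2 [a0 [a1 [arc_inj [arc_rev arc_pos]]]]]] := edges u v Euv.
have [hc1 hc2] := h_cont _ c1 c2.
do 2 (split; first done); rewrite a0 a1; do 2 (split; first done).
split; first by move=> s t s01 t01 /h_inj; apply: arc_inj.
split; first by move=> t t01; rewrite arc_rev.
by move=> t w t01 /h_inj; apply: arc_pos.
Qed.

End Drawings.

Section DisjointDrawings.

Variables (V1 V2 : finType) (E1 : rel V1) (E2 : rel V2).
Variables (pos1 : V1 -> R * R) (arc1 : V1 -> V1 -> R -> R * R).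
Variables (pos2 : V2 -> R * R) (arc2 : V2 -> V2 -> R -> R * R).

Definition sum_pos (z : V1 + V2) : R * R :=
  match z with inl a => pos1 a | inr b => pos2 b end.

Definition sum_arc (z w : V1 + V2) : R -> R * R :=
  match z, w with
  | inl a, inl b => arc1 a b
  | inr a, inr b => arc2 a b
  | _, _ => fun _ => (0, 0)
  end.

Variable S : R * R -> Prop.
Hypotheses (S_pos1 : forall x, S (pos1 x)) (S_arc1 : forall u v t, S (arc1 u v t)).
Hypotheses (S_pos2 : forall x, ~ S (pos2 x)) (S_arc2 : forall u v t, ~ S (arc2 u v t)).

Lemma drawing_sum :
  drawing E1 pos1 arc1 -> drawing E2 pos2 arc2 ->
  drawing (sum_rel E1 E2) sum_pos sum_arc.
Proof.
move=> [inj1 [edges1 disj1]] [inj2 [edges2 disj2]].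
have S_neq1 x y : pos1 x <> pos2 y.
  by move=> eq_xy; move: (S_pos1 x); rewrite eq_xy; apply: S_pos2.
have S_neq2 u v t w : arc1 u v t <> pos2 w.
  by move=> eq_tw; move: (S_arc1 u v t); rewrite eq_tw; apply: S_pos2.
have S_neq3 u v t w : arc2 u v t <> pos1 w.
  by move=> eq_tw; move: (S_pos1 w); rewrite -eq_tw; apply: S_arc2.
have S_neq4 u v s x y t : arc1 u v s <> arc2 x y t.
  by move=> eq_st; move: (S_arc1 u v s); rewrite eq_st; apply: S_arc2.
split.
  case=> [a|b] [a'|b'] //= eq_pos; first by rewrite (inj1 _ _ eq_pos).
  - by case: (S_neq1 _ _ eq_pos).
  - by case: (S_neq1 _ _ (esym eq_pos)).
  - by rewrite (inj2 _ _ eq_pos).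
split.
  case=> [a|a] [b|b] //= Eab.
  - have [c1 [c2 [a0 [a1 [arc_inj [arc_rev arc_pos]]]]]] := edges1 a b Eab.
    do 6 (split; first done).
    by move=> t [w|w] t01; [apply: arc_pos | apply: S_neq2].
  - have [c1 [c2 [a0 [a1 [arc_inj [arc_rev arc_pos]]]]]] := edges2 a b Eab.
    do 6 (split; first done).
    by move=> t [w|w] t01; [apply: S_neq3 | apply: arc_pos].
move=> [a|a] [b|b] [c|c] [d|d] //= Eab Ecd ne s t s01 t01.
- apply: disj1 => // -[] [eq1 eq2]; apply: ne; subst; by [left | right].
- exact/nesym/S_neq4.
- apply: disj2 => // -[] [eq1 eq2]; apply: ne; subst; by [left | right].
Qed.

End DisjointDrawings.

Definition half_plane_map (s : R) (z : R * R) : R * R := (s * exp z.1, z.2).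

Lemma half_plane_map_inj s : s <> 0 -> injective (half_plane_map s).
Proof.
move=> s0 [x y] [x' y'] [eq_exp ->]; congr (_, _).
by apply: exp_inv; apply: (Rmult_eq_reg_l s).
Qed.

Lemma half_plane_map_continuous s (g : R -> R * R) :
  continuity (fun t => fst (g t)) -> continuity (fun t => snd (g t)) ->
  continuity (fun t => fst (half_plane_map s (g t))) /\
  continuity (fun t => snd (half_plane_map s (g t))).
Proof.
move=> c1 c2; split => //=.
apply: (continuity_scal (fun t => exp (g t).1)).
apply: (continuity_comp (fun t => (g t).1)) => // x.
exact: derivable_continuous_pt (derivable_pt_exp x).
Qed.

(* Put the first graph in the right half-plane and the second in the left one. *)
Lemma planar_sum (V1 V2 : finType) (E1 : rel V1) (E2 : rel V2) :
  planar E1 -> planar E2 -> planar (sum_rel E1 E2).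
Proof.
move=> /planarP [pos1 [arc1 D1]] /planarP [pos2 [arc2 D2]]; apply/planarP.
have map_drawing s (V : finType) (E : rel V) pos arc : s <> 0 -> drawing E pos arc ->
    drawing E (fun x => half_plane_map s (pos x))
              (fun u v t => half_plane_map s (arc u v t)).
  by move=> s0; apply: drawing_map;
    [exact: half_plane_map_inj | exact: half_plane_map_continuous].
have D1' := map_drawing 1 _ _ _ _ R1_neq_R0 D1.
have D2' := map_drawing (-1) _ _ _ _ (Ropp_neq_0_compat _ R1_neq_R0) D2.
eexists; eexists; apply: (drawing_sum (S := fun z => 0 < z.1) _ _ _ _ D1' D2') => /=.
- by move=> x; rewrite Rmult_1_l; apply: exp_pos.
- by move=> u v t; rewrite Rmult_1_l; apply: exp_pos.
- by move=> x; have := exp_pos (pos2 x).1; lra.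
- by move=> u v t; have := exp_pos (arc2 u v t).1; lra.
Qed.

Local Close Scope R_scope.

Lemma planar_relpre (V W : finType) (E : rel V) (f : W -> V) :
  injective f -> planar E -> planar (relpre f E).
Proof.
move=> f_inj /planarP [pos [arc [pos_inj [edges disj]]]]; apply/planarP.
exists (fun a => pos (f a)), (fun a b => arc (f a) (f b)).
split; first by move=> a b /pos_inj/f_inj.
split=> [u v /edges [c1 [c2 [a0 [a1 [arc_inj [arc_rev arc_pos]]]]]] | u v x y Euv Exy ne].
  by do 6 (split; first done); move=> t w t01; apply: arc_pos.
apply: disj => // -[] [/f_inj eq1 /f_inj eq2]; apply: ne; by [left | right].
Qed.

Section UnionOfPlanar.

Variable V : finType.
Implicit Type E : rel V.

Lemma union_of_planar_mono E k k' :
  k <= k' -> union_of_planar E k -> union_of_planar E k'.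
Proof.
move=> le_kk' [F [planarF coverF]].
exists (fun i : 'I_k' => if insub (val i) is Some j then F j else fun _ _ => false).
split=> [i | x y /coverF [j Fj]]; last by exists (widen_ord le_kk' j); rewrite /= valK.
case: insubP => [j _ _ | _]; first exact: planarF.
by split=> //; apply: planar_single_edge.
Qed.

(* One planar subgraph per ordered pair of vertices. *)
Lemma union_of_planar_exists E : irreflexive E -> exists k, union_of_planar E k.
Proof.
move=> irrE; exists #|{: V * V}|.
exists (fun i x y => E x y && ((enum_rank (x, y) == i) || (enum_rank (y, x) == i))).
split=> [i | x y Exy]; last by exists (enum_rank (x, y)); rewrite Exy eqxx.
split=> [|x y /andP[] //]; apply: planar_single_edge => [x | u v x y].
  by rewrite irrE.
move=> /andP[_ /orP[]/eqP <-] /andP[_ /orP[]/eqP/enum_rank_inj[-> ->]]; by [left | right].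
Qed.

Lemma thickness_spec E : irreflexive E -> is_thickness E (thickness E).
Proof.
move=> /union_of_planar_exists ex_k; apply: epsilon_spec.
have [k [[Uk k_min] _]] :=
  dec_inh_nat_subset_has_unique_least_element _ (fun k => classic _) ex_k.
by exists k; split=> // k' /k_min/leP.
Qed.

End UnionOfPlanar.

Lemma union_of_planar_relpre (V W : finType) (E : rel V) (E' : rel W) (f : W -> V) k :
  injective f -> E' =2 relpre f E -> union_of_planar E k -> union_of_planar E' k.
Proof.
move=> f_inj E'E [F [planarF coverF]].
exists (fun i => relpre f (F i)); split=> [i | a b].
  have [planarFi subFi] := planarF i.
  by split=> [|a b /subFi]; [apply: planar_relpre | rewrite E'E].
by rewrite E'E => /coverF [i Fi]; exists i.
Qed.

Lemma union_of_planar_sum (V1 V2 : finType) (E1 : rel V1) (E2 : rel V2) k :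
  union_of_planar E1 k -> union_of_planar E2 k -> union_of_planar (sum_rel E1 E2) k.
Proof.
move=> [F1 [planarF1 coverF1]] [F2 [planarF2 coverF2]].
exists (fun i => sum_rel (F1 i) (F2 i)); split=> [i | [a|a] [b|b] //=].
- have [P1 sub1] := planarF1 i; have [P2 sub2] := planarF2 i.
  by split=> [|[a|a] [b|b] //=]; [apply: planar_sum | apply: sub1 | apply: sub2].
- by move=> /coverF1 [i Fi]; exists i.
- by move=> /coverF2 [i Fi]; exists i.
Qed.

Lemma thickness_sum (V1 V2 : finType) (E1 : rel V1) (E2 : rel V2) :
  irreflexive E1 -> irreflexive E2 ->
  thickness (sum_rel E1 E2) = maxn (thickness E1) (thickness E2).
Proof.
move=> irr1 irr2.
have [U U_min] := thickness_spec (sum_rel_irr irr1 irr2).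
have [U1 U1_min] := thickness_spec irr1; have [U2 U2_min] := thickness_spec irr2.
apply/eqP; rewrite eqn_leq geq_max; apply/and3P; split.
- apply/U_min/union_of_planar_sum.
    by apply: union_of_planar_mono U1; apply: leq_maxl.
  by apply: union_of_planar_mono U2; apply: leq_maxr.
- by apply/U1_min/(union_of_planar_relpre (f := inl) _ _ U) => [a b [] |].
- by apply/U2_min/(union_of_planar_relpre (f := inr) _ _ U) => [a b [] |].
Qed.

Lemma thickness_iso (V W : finType) (E : rel V) (F : rel W) (f : V -> W) (g : W -> V) :
  cancel f g -> cancel g f -> E =2 relpre f F -> irreflexive F ->
  thickness E = thickness F.
Proof.
move=> fK gK EF irrF.
have FE : F =2 relpre g E by move=> a b; rewrite /= EF /= !gK.
have irrE : irreflexive E by move=> x; rewrite EF /= irrF.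
have [UE E_min] := thickness_spec irrE; have [UF F_min] := thickness_spec irrF.
apply/eqP; rewrite eqn_leq; apply/andP; split.
- exact/E_min/(union_of_planar_relpre (can_inj fK) EF UF).
- exact/F_min/(union_of_planar_relpre (can_inj gK) FE UE).
Qed.

Section OrdPair.

Variables m p : nat.

Lemma card_ord_pair : #|{: 'I_m * 'I_p}| = m * p.
Proof. by rewrite card_prod !card_ord. Qed.

Definition ord_of_pair (x : 'I_m * 'I_p) : 'I_(m * p) :=
  cast_ord card_ord_pair (enum_rank x).

Definition pair_of_ord (i : 'I_(m * p)) : 'I_m * 'I_p :=
  enum_val (cast_ord (esym card_ord_pair) i).

Lemma ord_of_pairK : cancel ord_of_pair pair_of_ord.
Proof. by move=> x; rewrite /pair_of_ord cast_ordK enum_rankK. Qed.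

Lemma pair_of_ordK : cancel pair_of_ord ord_of_pair.
Proof. by move=> i; rewrite /ord_of_pair enum_valK cast_ordKV. Qed.

End OrdPair.

Section KronKbip.

Variables m n p q : nat.

Definition kron_Kbip_vertex := (('I_m + 'I_n) * ('I_p + 'I_q))%type.
Definition sum_Kbip_vertex := (('I_(m * p) + 'I_(n * q)) + ('I_(m * q) + 'I_(n * p)))%type.

Definition kron_Kbip_split (x : kron_Kbip_vertex) : sum_Kbip_vertex :=
  match x with
  | (inl a, inl c) => inl (inl (ord_of_pair (a, c)))
  | (inr b, inr d) => inl (inr (ord_of_pair (b, d)))
  | (inl a, inr d) => inr (inl (ord_of_pair (a, d)))
  | (inr b, inl c) => inr (inr (ord_of_pair (b, c)))
  end.

Definition kron_Kbip_merge (z : sum_Kbip_vertex) : kron_Kbip_vertex :=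
  match z with
  | inl (inl i) => (inl (pair_of_ord i).1, inl (pair_of_ord i).2)
  | inl (inr i) => (inr (pair_of_ord i).1, inr (pair_of_ord i).2)
  | inr (inl i) => (inl (pair_of_ord i).1, inr (pair_of_ord i).2)
  | inr (inr i) => (inr (pair_of_ord i).1, inl (pair_of_ord i).2)
  end.

Lemma kron_Kbip_splitK : cancel kron_Kbip_split kron_Kbip_merge.
Proof. by case=> [] [a|b] [c|d] /=; rewrite ord_of_pairK. Qed.

Lemma kron_Kbip_mergeK : cancel kron_Kbip_merge kron_Kbip_split.
Proof. by case=> [] [i|i] /=; rewrite -surjective_pairing pair_of_ordK. Qed.

Lemma kron_Kbip_splitE :
  kron (Kbip m n) (Kbip p q) =2
  relpre kron_Kbip_split (sum_rel (Kbip (m * p) (n * q)) (Kbip (m * q) (n * p))).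
Proof. by case=> [] [a|a] [c|c] [] [b|b] [d|d]. Qed.

End KronKbip.

Lemma Kbip_irr a b : irreflexive (Kbip a b).
Proof. by case. Qed.

Theorem theorem3p6 (m n p q : nat) :
  0 < m -> 0 < n -> 0 < p -> 0 < q ->
  thickness (kron (Kbip m n) (Kbip p q)) =
  maxn (thickness (Kbip (m * p) (n * q))) (thickness (Kbip (m * q) (n * p))).
Proof.
move=> _ _ _ _.
rewrite (thickness_iso (@kron_Kbip_splitK m n p q) (@kron_Kbip_mergeK m n p q)
           (@kron_Kbip_splitE m n p q)); last by apply: sum_rel_irr; apply: Kbip_irr.
by apply: thickness_sum; apply: Kbip_irr.
Qed.
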